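(* Every satisfiable $\mathsf{BST}^{\otimes}$-conjunction with $n$ variables is fulfilled by an accessible $\otimes$-graph of size at most $2^{n}-1$.
   Context: Sets range over the von Neumann universe of well-founded sets. For sets $s,t$, $s\otimes t=\{\{u,v\} : u\in s,\ v\in t\}$. A $\mathsf{BST}^{\otimes}$-conjunction is a finite conjunction of literals of the forms $x=y\cup z$, $x=y\setminus z$, $x=y\otimes z$, $x\neq y$; it is satisfiable if some set assignment $M$ makes all literals true when each variable $v$ is interpreted as $Mv$. A $\otimes$-graph $\mathcal G=(\mathcal P,\mathcal N,\mathcal T)$ consists of a set $\mathcal P$ of places, the set of nodes $\mathcal N=\mathcal P\otimes\mathcal P$ (the nonempty subsets of $\mathcal P$ with at most two elements), $\mathcal P\cap\mathcal N=\emptyset$, and a target map $\mathcal T:\mathcal N\to\mathcal P(\mathcal P)$; its size is $|\mathcal P|$. A source place is a place belonging to no $\mathcal T(A)$. The accessible places form the smallest set of places containing all source places and containing $\mathcal T(A)$ whenever all places of the node $A$ belong to it; $\mathcal G$ is accessible if every place is accessible. A map $\mathfrak F:\mathrm{Vars}(\Phi)\to\mathcal P(\mathcal P)$ is $\mathcal G$-fulfilling for $\Phi$ if: (a) $\mathfrak F(x)=\mathfrak F(y)\star\mathfrak F(z)$ for each conjunct $x=y\star z$, $\star\in\{\cup,\setminus\}$; (b) $\mathfrak F(x)\neq\mathfrak F(y)$ for each conjunct $x\neq y$; (c) for each conjunct $x=y\otimes z$: (c1) $\emptyset\neq\mathcal T(\{\upsilon,\zeta\})\subseteq\mathfrak F(x)$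 for all $\upsilon\in\mathfrak F(y),\zeta\in\mathfrak F(z)$; (c2) $\mathfrak F(x)\subseteq\bigcup\{\mathcal T(A):A\in\mathfrak F(y)\otimes\mathfrak F(z)\}$; (c3) $\bigcup\{\mathcal T(A):A\in\mathcal N\setminus(\mathfrak F(y)\otimes\mathfrak F(z))\}\cap\mathfrak F(x)=\emptyset$. $\mathcal G$ fulfills $\Phi$ if such a map exists. *)

From Stdlib Require List.
From mathcomp Require Import all_boot.
Set Implicit Arguments. Unset Strict Implicit. Unset Printing Implicit Defensive.

(* ---------- Well-founded sets: Aczel's model of the cumulative hierarchy ---------- *)
Inductive V : Type := sup (A : Type) (f : A -> V).

(* extensional equality of sets (bisimulation) *)
Fixpoint Veq (x y : V) {struct x} : Prop :=
  match x, y with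
  | sup A f, sup B g =>
      (forall a : A, exists b : B, Veq (f a) (g b)) /\
      (forall b : B, exists a : A, Veq (f a) (g b))
  end.

Definition Vin (x y : V) : Prop :=
  match y with sup B g => exists b : B, Veq x (g b) end.

Definition VisPair (w u v : V) : Prop :=
  forall t, Vin t w <-> (Veq t u \/ Veq t v).

Inductive literal : Type :=
  | LUnion  (x y z : nat)   (* x = y \cup z *)
  | LDiff   (x y z : nat)   (* x = y \setminus z *)
  | LOtimes (x y z : nat)   (* x = y \otimes z *)
  | LNeq    (x y : nat).

Definition conjunction := seq literal.

Definition lit_vars (l : literal) : seq nat :=
  match l with
  | LUnion x y z | LDiff x y z | LOtimes x y z => [:: x; y; z]
  | LNeq x y => [:: x; y]
  end.

Definition vars (Phi : conjunction) : seq nat := undup (flatten (map lit_vars Phi)).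

Definition lit_holds (M : nat -> V) (l : literal) : Prop :=
  match l with
  | LUnion x y z => forall w, Vin w (M x) <-> (Vin w (M y) \/ Vin w (M z))
  | LDiff x y z => forall w, Vin w (M x) <-> (Vin w (M y) /\ ~ Vin w (M z))
  | LOtimes x y z => forall w, Vin w (M x) <->
        exists u v, Vin u (M y) /\ Vin v (M z) /\ VisPair w u v
  | LNeq x y => ~ Veq (M x) (M y)
  end.

Definition satisfiable (Phi : conjunction) : Prop :=
  exists M : nat -> V, forall l, List.In l Phi -> lit_holds M l.

(* Places form a finite type P; nodes are the subsets A of P with 1 <= |A| <= 2;
   the target map is T : {set P} -> {set P}, of which only the values on nodes matter. *)
Definition is_node (P : finType) (A : {set P}) : bool := (0 < #|A| <= 2)%N.

Definition set_otimes (P : finType) (S1 S2 : {set P}) : {set {set P}} :=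
  [set [set u; v] | u in S1, v in S2].

Definition source_place (P : finType) (T : {set P} -> {set P}) (p : P) : Prop :=
  forall A : {set P}, is_node A -> p \notin T A.

Definition accessible_place (P : finType) (T : {set P} -> {set P}) (p : P) : Prop :=
  forall S : {set P},
    (forall q, source_place T q -> q \in S) ->
    (forall A : {set P}, is_node A -> A \subset S -> T A \subset S) ->
    p \in S.

Definition accessible_graph (P : finType) (T : {set P} -> {set P}) : Prop :=
  forall p : P, accessible_place T p.

Definition lit_fulfilled (P : finType) (T : {set P} -> {set P}) (F : nat -> {set P})
    (l : literal) : Prop :=
  match l with
  | LUnion x y z => F x = F y :|: F z
  | LDiff x y z => F x = F y :\: F z
  | LNeq x y => F x <> F y
  | LOtimes x y z =>
      (forall u v, u \in F y -> v \in F z ->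
         T [set u; v] != set0 /\ T [set u; v] \subset F x) /\
      (F x \subset \bigcup_(A in set_otimes (F y) (F z)) T A) /\
      (forall A : {set P}, is_node A -> A \notin set_otimes (F y) (F z) ->
         [disjoint T A & F x])
  end.

Definition fulfills (P : finType) (T : {set P} -> {set P}) (Phi : conjunction) : Prop :=
  exists F : nat -> {set P}, forall l, List.In l Phi -> lit_fulfilled T F l.

From mathcomp Require Import all_boot.
From mathcomp Require Import boolp.
Set Implicit Arguments. Unset Strict Implicit. Unset Printing Implicit Defensive.

(* Let M be a model of Phi and v_0, ..., v_(n-1)
   the variables of Phi.  The "region" of a set w is the set of indices i with
   w \in M v_i; the places of the graph are the 2^n - 1 nonempty regions, and
   a variable x is interpreted by the set F x of regions realized by some
   element of M x.  Since membership in M x only depends on the region (for x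
   a variable of Phi), the Boolean literals and the disequalities transfer
   from M to F.  The target of a node {s, t} collects the regions of the pairs
   {u, v} in M x, for a literal x = y \otimes z of Phi, such that u and v lie
   in the regions s and t; conditions (c1)-(c3) then follow from the
   corresponding property of M x = M y \otimes M z.  Accessibility is proved
   by \in-induction: the region of w is either a source place or the target of
   the node formed by the regions of the two elements of w. *)

Lemma Veq_refl x : Veq x x.
Proof. by elim: x => A f IH /=; split=> a; exists a. Qed.

Lemma Veq_sym x y : Veq x y -> Veq y x.
Proof.
elim: x y => A f IH [B g] /= [fg gf]; split.
- by move=> b; have [a /IH] := gf b; exists a.
- by move=> a; have [b /IH] := fg a; exists b.
Qed.

Lemma Veq_trans x y z : Veq x y -> Veq y z -> Veq x z.
Proof.
elim: x y z => A f IH [B g] [C h] /= [fg gf] [gh hg]; split.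
- move=> a; have [b fgab] := fg a; have [c ghbc] := gh b.
  by exists c; apply: IH fgab ghbc.
- move=> c; have [b ghbc] := hg c; have [a fgab] := gf b.
  by exists a; apply: IH fgab ghbc.
Qed.

Lemma Vin_eql x x' y : Veq x x' -> Vin x y -> Vin x' y.
Proof. by case: y => B g /= xx' [b xgb]; exists b; apply: Veq_trans (Veq_sym xx') xgb. Qed.

Lemma Vext X Y : (forall w, Vin w X <-> Vin w Y) -> Veq X Y.
Proof.
case: X Y => A f [B g] XY /=; split.
- by move=> a; apply/XY; exists a; apply: Veq_refl.
- move=> b; have /XY [a fab] : Vin (g b) (sup g) by exists b; apply: Veq_refl.
  by exists a; apply: Veq_sym.
Qed.

Lemma Vin_ind (P : V -> Prop) :
  (forall x y, Veq x y -> P x -> P y) ->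
  (forall w, (forall u, Vin u w -> P u) -> P w) -> forall w, P w.
Proof.
move=> P_Veq step; elim=> A f IH; apply: step => u [a ufa].
by apply: P_Veq (IH a); apply: Veq_sym.
Qed.

Definition vpair (u v : V) : V := sup (fun b : bool => if b then u else v).

Lemma vpairP u v : VisPair (vpair u v) u v.
Proof. by move=> t; split=> [[[]]|[]]; [left|right|exists true|exists false]. Qed.

Lemma VisPair_sym w u v : VisPair w u v -> VisPair w v u.
Proof. by move=> wuv t; rewrite wuv; split; case; [right|left|right|left]. Qed.

Lemma VisPair_inv w u v u' v' : VisPair w u v -> VisPair w u' v' ->
  (Veq u u' /\ Veq v v') \/ (Veq u v' /\ Veq v u').
Proof.
move=> wuv wuv'.
have uw : Vin u w by apply/wuv; left; apply: Veq_refl.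
have vw : Vin v w by apply/wuv; right; apply: Veq_refl.
have u'w : Vin u' w by apply/wuv'; left; apply: Veq_refl.
have v'w : Vin v' w by apply/wuv'; right; apply: Veq_refl.
case/wuv': uw => uu'; case/wuv': vw => vv'; [|by left|by right|].
- left; split=> //; case/wuv: v'w => [v'u|//]; last exact: Veq_sym.
  by apply: Veq_trans vv' (Veq_trans (Veq_sym uu') (Veq_sym v'u)).
- right; split=> //; case/wuv: u'w => [u'u|//]; last exact: Veq_sym.
  by apply: Veq_trans vv' (Veq_trans (Veq_sym uu') (Veq_sym u'u)).
Qed.

Lemma set2_inv (T : finType) (a b c d : T) : [set a; b] = [set c; d] ->
  (a = c /\ b = d) \/ (a = d /\ b = c).
Proof.
move=> abcd.
have /set2P[] : a \in [set c; d] by rewrite -abcd set21.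
all: have /set2P[] : b \in [set c; d] by rewrite -abcd set22.
all: move=> bcd acd; subst a b.
(* the mixed cases are immediate; if a = b, the other side also collapses *)
2: by left.
2: by right.
{ have /set2P[] : d \in [set c; c] by rewrite abcd set22.
  all: by move=> dc; left; rewrite dc. }
have /set2P[] : c \in [set d; d] by rewrite abcd set21.
all: by move=> cd; left; rewrite cd.
Qed.

Definition place (n : nat) : finType := {s : {set 'I_n} | s != set0}.

Lemma card_place n : #|place n| = (2 ^ n - 1)%N.
Proof.
rewrite card_sig -[in RHS](card_ord n) -cardsT -card_powerset powersetT cardsT.
by rewrite subn1 -(cardC1 set0); apply: eq_card => s; rewrite !inE.
Qed.

Lemma is_node_set2 (P : finType) (s t : P) : is_node [set s; t].
Proof. by rewrite /is_node cards2; case: (s != t). Qed.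

Lemma source_or_target (P : finType) (T : {set P} -> {set P}) (p : P) :
  source_place T p \/ exists A, is_node A /\ p \in T A.
Proof.
have [|notarget] := pselect (exists A, is_node A /\ p \in T A); first by right.
by left=> A nodeA; apply/negP => pTA; apply: notarget; exists A.
Qed.

Lemma lit_vars_in Phi l v : List.In l Phi -> v \in lit_vars l -> v \in vars Phi.
Proof.
rewrite /vars mem_undup; elim: Phi => //= l' Phi IH [<-|lPhi] vl; rewrite mem_cat.
  by rewrite vl.
by rewrite IH ?orbT.
Qed.

Section Regions.
Variables (vs : seq nat) (M : nat -> V).

Local Notation n := (size vs).

Definition region (w : V) : {set 'I_n} := [set i : 'I_n | `[< Vin w (M (nth 0 vs i)) >]].

Lemma region_Veq w w' : Veq w w' -> region w = region w'.
Proof.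
move=> ww'; apply/setP => i; rewrite !inE.
by apply/asboolP/asboolP; apply: Vin_eql; last apply: Veq_sym.
Qed.

Lemma index_ord x : x \in vs -> exists i : 'I_n, nth 0 vs i = x.
Proof. by rewrite -index_mem => xvs; exists (Ordinal xvs); rewrite /= nth_index // -index_mem. Qed.

Lemma region_determines x w w' : x \in vs -> region w = region w' ->
  Vin w (M x) -> Vin w' (M x).
Proof.
move=> /index_ord [i <-] ww' wx.
have : i \in region w by rewrite inE; apply/asboolP.
by rewrite ww' inE => /asboolP.
Qed.

Lemma region_place x w : x \in vs -> Vin w (M x) ->
  exists r : place n, val r = region w.
Proof.
move=> /index_ord [i xi] wx.
suff nz : region w != set0 by exists (exist (fun s => s != set0) _ nz).
by apply/set0Pn; exists i; rewrite inE xi; apply/asboolP.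
Qed.

Definition realized (x : nat) : {set place n} :=
  [set r | `[< exists w, val r = region w /\ Vin w (M x) >]].

Lemma realizedP x r :
  reflect (exists w, val r = region w /\ Vin w (M x)) (r \in realized x).
Proof. by rewrite inE; apply: asboolP. Qed.

Lemma realized_region x w r : x \in vs -> val r = region w ->
  r \in realized x <-> Vin w (M x).
Proof.
move=> xvs rw; split=> [/realizedP [w' [rw' w'x]]|wx]; last by apply/realizedP; exists w.
by apply: region_determines xvs _ w'x; rewrite -rw'.
Qed.

Lemma realized_union x y z : lit_holds M (LUnion x y z) ->
  x \in vs -> y \in vs -> z \in vs -> realized x = realized y :|: realized z.
Proof.
move=> /= xyz xvs yvs zvs; apply/setP => r; rewrite in_setU.
apply/realizedP/orP => [[w [rw /xyz wyz]]|].
  by rewrite !(realized_region _ rw).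
by case=> /realizedP [w [rw wM]]; exists w; split=> //; apply/xyz; [left|right].
Qed.

Lemma realized_diff x y z : lit_holds M (LDiff x y z) ->
  x \in vs -> y \in vs -> z \in vs -> realized x = realized y :\: realized z.
Proof.
move=> /= xyz xvs yvs zvs; apply/setP => r; rewrite in_setD andbC.
apply/realizedP/andP => [[w [rw /xyz [wy wz]]]|[/realizedP [w [rw wy]] rz]].
  split; first exact/(realized_region yvs rw).
  by apply/negP => /(realized_region zvs rw).
exists w; split=> //; apply/xyz; split=> // wz.
by move/negP: rz; apply; apply/(realized_region _ rw).
Qed.

Lemma realized_neq x y : lit_holds M (LNeq x y) ->
  x \in vs -> y \in vs -> realized x <> realized y.
Proof.
move=> /= xy xvs yvs rxy; apply: xy; apply: Vext => w.
suff realized_eq a b : a \in vs -> b \in vs -> realized a = realized b ->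
    Vin w (M a) -> Vin w (M b) by split; apply: realized_eq.
move=> avs bvs rab wa; have [r rw] := region_place avs wa.
by rewrite -(realized_region bvs rw) -rab (realized_region avs rw).
Qed.

End Regions.

Section VennGraph.
Variables (Phi : conjunction) (M : nat -> V).

Local Notation n := (size (vars Phi)).
Local Notation region := (region (vars Phi) M).
Local Notation realized := (realized (vars Phi) M).

Definition produced (A : {set place n}) (r : place n) : Prop :=
  exists x y z w u v (s t : place n), List.In (LOtimes x y z) Phi /\
    Vin w (M x) /\ VisPair w u v /\ val r = region w /\
    val s = region u /\ val t = region v /\ A = [set s; t].

Definition target (A : {set place n}) : {set place n} := [set r | `[< produced A r >]].

Lemma targetP A r : reflect (produced A r) (r \in target A).
Proof. by rewrite inE; apply: asboolP. Qed.

Lemma otimes_vars x y z : List.In (LOtimes x y z) Phi ->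
  [/\ x \in vars Phi, y \in vars Phi & z \in vars Phi].
Proof. by move=> lPhi; split; apply: (lit_vars_in lPhi); rewrite !inE eqxx ?orbT. Qed.

Lemma realized_otimes_nonempty x y z : List.In (LOtimes x y z) Phi ->
  lit_holds M (LOtimes x y z) -> forall s t, s \in realized y -> t \in realized z ->
  target [set s; t] != set0.
Proof.
move=> lPhi /= xyz s t /realizedP [u [su uy]] /realizedP [v [tv vz]].
have [xvs _ _] := otimes_vars lPhi.
have pairx : Vin (vpair u v) (M x).
  by apply/xyz; exists u, v; split; [|split; last apply: vpairP].
have [r rw] := region_place xvs pairx.
apply/set0Pn; exists r; apply/targetP; exists x, y, z, (vpair u v), u, v, s, t.
by do 2!split=> //; split; first exact: vpairP.
Qed.

Lemma realized_otimes_target x y z : List.In (LOtimes x y z) Phi ->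
  lit_holds M (LOtimes x y z) -> forall s t, s \in realized y -> t \in realized z ->
  target [set s; t] \subset realized x.
Proof.
move=> lPhi /= xyz s t /realizedP [u [su uy]] /realizedP [v [tv vz]].
have [_ yvs zvs] := otimes_vars lPhi.
apply/subsetP => r /targetP [_ [_ [_ [w [u' [v' [s' [t' [_ [_ [wuv [rw [su' [tv' st]]]]]]]]]]]]]].
apply/realizedP; exists w; split=> //; apply/xyz.
have [[ss' tt']|[st' ts']] := set2_inv st; subst s' t'.
- exists u', v'; split; first by apply: region_determines yvs _ uy; rewrite -su.
  by split=> //; apply: region_determines zvs _ vz; rewrite -tv.
- exists v', u'; split; first by apply: region_determines yvs _ uy; rewrite -su.
  split; first by apply: region_determines zvs _ vz; rewrite -tv.
  exact: VisPair_sym.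
Qed.

Lemma realized_otimes_cover x y z : List.In (LOtimes x y z) Phi ->
  lit_holds M (LOtimes x y z) ->
  realized x \subset \bigcup_(A in set_otimes (realized y) (realized z)) target A.
Proof.
move=> lPhi /= xyz; have [_ yvs zvs] := otimes_vars lPhi.
apply/subsetP => r /realizedP [w [rw wx]].
have [u [v [uy [vz wuv]]]] := proj1 (xyz w) wx.
have [s su] := region_place yvs uy; have [t tv] := region_place zvs vz.
apply/bigcupP; exists [set s; t].
  by apply: imset2_f; apply/realizedP; [exists u|exists v].
by apply/targetP; exists x, y, z, w, u, v, s, t.
Qed.

Lemma realized_otimes_disjoint x y z : List.In (LOtimes x y z) Phi ->
  lit_holds M (LOtimes x y z) -> forall A, A \notin set_otimes (realized y) (realized z) ->
  [disjoint target A & realized x].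
Proof.
move=> lPhi /= xyz A notA; have [xvs yvs zvs] := otimes_vars lPhi.
rewrite -setI_eq0; apply/set0Pn => -[r /setIP [/targetP rA rx]].
have [_ [_ [_ [w [u [v [s [t [_ [_ [wuv [rw [su [tv Ast]]]]]]]]]]]]]] := rA.
have /xyz [u0 [v0 [u0y [v0z wuv0]]]] : Vin w (M x) by apply/(realized_region xvs rw).
move/negP: notA; apply; rewrite Ast.
have [[uu0 vv0]|[uv0 vu0]] := VisPair_inv wuv wuv0; last rewrite setUC.
all: apply: imset2_f; apply/realizedP; [exists u0|exists v0]; split=> //.
all: by rewrite ?su ?tv; apply: region_Veq.
Qed.

Hypothesis model : forall l, List.In l Phi -> lit_holds M l.

Lemma venn_fulfills : fulfills target Phi.
Proof.
exists realized => l lPhi; have vl := lit_vars_in lPhi; have Ml := model lPhi.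
case: l lPhi vl Ml => [x y z|x y z|x y z|x y] lPhi vl Ml /=.
- by apply: (realized_union (vs := vars Phi) Ml); apply: vl; rewrite !inE eqxx ?orbT.
- by apply: (realized_diff (vs := vars Phi) Ml); apply: vl; rewrite !inE eqxx ?orbT.
- split; first by move=> s t sy tz; split;
    [apply: realized_otimes_nonempty lPhi Ml s t sy tz
    |apply: realized_otimes_target lPhi Ml s t sy tz].
  split; first exact: realized_otimes_cover lPhi Ml.
  by move=> A _; apply: realized_otimes_disjoint lPhi Ml A.
- by apply: (realized_neq (vs := vars Phi) Ml); apply: vl; rewrite !inE eqxx ?orbT.
Qed.

Lemma target_region A r : r \in target A ->
  exists x y z w, [/\ List.In (LOtimes x y z) Phi, Vin w (M x) & val r = region w].
Proof.
by case/targetP => [x [y [z [w [_ [_ [_ [_ [lPhi [wx [_ [rw _]]]]]]]]]]]]; exists x, y, z, w.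
Qed.

Lemma produced_from_elements A r w : r \in target A -> val r = region w ->
  exists u v (s t : place n), [/\ Vin u w, Vin v w, val s = region u,
    val t = region v & r \in target [set s; t]].
Proof.
move=> /target_region [x [y [z [w' [lPhi w'x rw']]]]] rw.
have [xvs yvs zvs] := otimes_vars lPhi.
have wx : Vin w (M x) by apply: region_determines xvs _ w'x; rewrite -rw' rw.
have [u [v [uy [vz wuv]]]] := proj1 (model lPhi w) wx.
have [s su] := region_place yvs uy; have [t tv] := region_place zvs vz.
exists u, v, s, t; split=> //.
- by apply/(wuv u); left; apply: Veq_refl.
- by apply/(wuv v); right; apply: Veq_refl.
- by apply/targetP; exists x, y, z, w, u, v, s, t.
Qed.

(* Every place lies in each set S closed under the accessibility rules: by
   \in-induction on w, the region of w is a source or the target of the node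
   of the regions of two elements of w, which lie in S by induction. *)
Lemma venn_accessible : accessible_graph target.
Proof.
move=> p S sources closed.
have regions_in : forall w r, val r = region w -> r \in S.
  elim/Vin_ind => [w w' ww' IH r rw'|w IH r rw].
    by apply: IH; rewrite rw' (region_Veq _ _ ww').
  have [r_source|[A [_ rA]]] := source_or_target target r; first exact: sources.
  have [u [v [s [t [uw vw su tv rst]]]]] := produced_from_elements rA rw.
  have stS : [set s; t] \subset S.
    by apply/subsetP => q /set2P [->|->]; [apply: IH su|apply: IH tv].
  exact: subsetP (closed _ (is_node_set2 s t) stS) r rst.
have [p_source|[A [_ pA]]] := source_or_target target p; first exact: sources.
have [_ [_ [_ [w [_ _ pw]]]]] := target_region pA.
exact: regions_in pw.
Qed.

End VennGraph.

Theorem mainTheorem9 (Phi : conjunction) :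
  satisfiable Phi ->
  exists (P : finType) (T : {set P} -> {set P}),
    (#|P| <= 2 ^ size (vars Phi) - 1)%N /\ accessible_graph T /\ fulfills T Phi.
Proof.
move=> [M model]; exists (place (size (vars Phi))), (@target Phi M).
split; first by rewrite card_place.
split; [exact: venn_accessible | exact: venn_fulfills].
Qed.
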